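(* Let $H\trianglelefteq G\le\mathrm{Aut}~T$ be closed fractal subgroups with $H\ne1$. If $H$ is branch, then $G_H$ is branch and $$|G_H:H|=|\pi_D(G_H):\pi_D(H)|<\infty,$$ where $D$ is the depth of $H$ as a group of finite type.
   Context: $T$ is the $d$-adic rooted tree; $\mathcal L_n$ its $n$th level; $T^n$ the subtree of vertices at depth $\le n$; $\pi_n:\mathrm{Aut}~T\to\mathrm{Aut}~T^n$ restriction; congruence topology on $\mathrm{Aut}~T$. For $g\in\mathrm{Aut}~T$, vertex $v$ and $1\le n\le\infty$, the section $g|_v^n\in\mathrm{Aut}~T^n$ is defined by $(vw)^g=v^gw^{g|_v^n}$ for $w\in T^n$; write $g|_v=g|_v^\infty$. Fractal: closed under sections, level-transitive, and $\{g|_v:g\in G,v^g=v\}=G$ for all $v$. $\mathrm{rist}_G(v)$: elements fixing all non-descendants of $v$; $\mathrm{Rist}_G(n)=\prod_{v\in\mathcal L_n}\mathrm{rist}_G(v)$; $G$ branch if level-transitive and $|G:\mathrm{Rist}_G(n)|<\infty$ for all $n$. For $D\ge1$ and $\mathcal P\le\mathrm{Aut}~T^D$, $G_{\mathcal P}:=\{g:g|_v^D\in\mathcal P\ \forall v\}$; a group is of finite type of depth $D$ if it equals some such $G_{\mathcal P}$ (a closed fractal group is branch iff it is of finite type). $G_H:=\{g\in G:(g|_v)(g|_w)^{-1}\in H\ \forall v,w\}$. *)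

From mathcomp Require Import all_boot fingroup perm.
Set Implicit Arguments. Unset Strict Implicit. Unset Printing Implicit Defensive.
Local Open Scope group_scope.

Definition vert (d : nat) := seq 'I_d.

(* An automorphism of T is given by its portrait: a permutation label at
   each vertex.  This is a bijection with Aut T.  Right actions throughout. *)
Definition aut (d : nat) := vert d -> {perm 'I_d}.

Section Tree.
Variable d : nat.
Implicit Types (g h : aut d) (v w : vert d).

Definition section g v : aut d := fun w => g (v ++ w).

Fixpoint act g v {struct v} : vert d :=
  match v with
  | [::] => [::]
  | x :: w => g [::] x :: act (section g [:: x]) w
  end.

Fixpoint act_inv g v {struct v} : vert d :=
  match v with
  | [::] => [::]
  | x :: w => let y := (g [::])^-1 x in y :: act_inv (section g [:: y]) w
  end.

Definition aut1 : aut d := fun _ => 1.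
(* product gh = "first g, then h" *)
Definition autM g h : aut d := fun v => g v * h (act g v).
Definition autV g : aut d := fun v => (g (act_inv g v))^-1.

Definition is_subgroup (G : aut d -> Prop) :=
  [/\ G aut1, (forall g h, G g -> G h -> G (autM g h)) & (forall g, G g -> G (autV g))].

Definition normal_in (H G : aut d -> Prop) :=
  (forall h, H h -> G h) /\ (forall g h, G g -> H h -> H (autM (autM (autV g) h) g)).

(* pi_n : Aut T -> Aut T^n, where Aut T^n is identified with portraits that
   are trivial at all vertices of depth >= n. trunc n is a homomorphism. *)
Definition trunc (n : nat) g : aut d := fun v => if size v < n then g v else 1.

Definition img_trunc (n : nat) (G : aut d -> Prop) : aut d -> Prop :=
  fun x => exists g, G g /\ x = trunc n g.

Definition cong_closed (G : aut d -> Prop) :=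
  forall g, (forall n, exists h, G h /\ trunc n h = trunc n g) -> G g.

Definition level_transitive (G : aut d -> Prop) :=
  forall v w, size v = size w -> exists g, G g /\ act g v = w.

Definition fractal (G : aut d -> Prop) :=
  [/\ (forall g v, G g -> G (section g v)),
      level_transitive G &
      (forall v h, G h -> exists g, [/\ G g, act g v = v & section g v = h])].

(* |G : H| = n  (H a subgroup of G): n right-coset representatives *)
Definition index_eq (G H : aut d -> Prop) (n : nat) :=
  exists s : seq (aut d),
    [/\ size s = n,
        (forall i, i < n -> G (nth aut1 s i)),
        (forall i j, i < n -> j < n -> H (autM (nth aut1 s i) (autV (nth aut1 s j))) -> i = j) &
        (forall g, G g -> exists i, i < n /\ H (autM g (autV (nth aut1 s i))))].

Definition finite_index (G H : aut d -> Prop) := exists n, index_eq G H n.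

Definition rist (G : aut d -> Prop) v : aut d -> Prop :=
  fun g => G g /\ (forall w, ~~ prefix v w -> act g w = w).

Definition level (n : nat) : seq (vert d) := [seq val t | t <- enum {: n.-tuple 'I_d}].

Definition Rist (G : aut d -> Prop) (n : nat) : aut d -> Prop :=
  fun g => exists f : vert d -> aut d,
    (forall v, size v = n -> rist G v (f v)) /\
    g = foldr autM aut1 [seq f v | v <- level n].

Definition branch (G : aut d -> Prop) :=
  level_transitive G /\ forall n, finite_index G (Rist G n).

Definition finite_type_group (D : nat) (P : aut d -> Prop) : aut d -> Prop :=
  fun g => forall v, P (trunc D (section g v)).

Definition is_subgroup_level (D : nat) (P : aut d -> Prop) :=
  is_subgroup P /\ (forall x, P x -> trunc D x = x).

Definition GH (G H : aut d -> Prop) : aut d -> Prop :=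
  fun g => G g /\ forall v w, H (autM (section g v) (autV (section g w))).

End Tree.

(* Since H is normal in G, G_H is a subgroup containing H. If H = G_P has depth D, an
   element x of G_H with pi_D(x) in pi_D(H) lies in H: each section x|_v differs from x
   by an element of H, so pi_D(x|_v) lies in P together with pi_D(x). Hence H is the
   full preimage of pi_D(H) in G_H, so that |G_H : H| = |pi_D(G_H) : pi_D(H)|, which is
   finite because Aut T^D is.
   To see that G_H is branch, note that H is of finite type. For a first-level vertex x,
   fractality and |H : Rist_H(1)| < oo show that the group L_x of sections at x of
   rist_H(x) has finite index in H; it is closed, hence open, so it contains the kernel
   of some pi_M. An element whose sections all agree with H to depth M+1 can then be
   corrected level by level by elements of Rist_H(1) glued from the L_x, so it lies in
   the closure of H, which is H. Finally |G_H : Rist_{G_H}(n)| <= |G_H : H| |H : Rist_H(n)|. *)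

From mathcomp Require Import all_boot fingroup perm.
From Stdlib Require Import FunctionalExtensionality Classical.
Set Implicit Arguments. Unset Strict Implicit. Unset Printing Implicit Defensive.
Local Open Scope group_scope.

Section Portraits.
Variable d : nat.
Implicit Types (g h k : aut d) (u v w : vert d).

Lemma size_act g v : size (act g v) = size v.
Proof. by elim: v g => //= x v IH g; rewrite IH. Qed.

Lemma size_act_inv g v : size (act_inv g v) = size v.
Proof. by elim: v g => //= x v IH g; rewrite IH. Qed.

Lemma section_cat g v w : section (section g v) w = section g (v ++ w).
Proof. by apply: functional_extensionality => u; rewrite /section catA. Qed.

Lemma act_cat g v w : act g (v ++ w) = act g v ++ act (section g v) w.
Proof. by elim: v g => //= x v IH g; rewrite IH section_cat. Qed.

Lemma act1 v : act (@aut1 d) v = v.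
Proof. by elim: v => //= x v IH; rewrite perm1 IH. Qed.

Lemma section_autM g h v :
  section (autM g h) v = autM (section g v) (section h (act g v)).
Proof. by apply: functional_extensionality => w; rewrite /section /autM act_cat. Qed.

Lemma act_autM g h v : act (autM g h) v = act h (act g v).
Proof. by elim: v g h => //= x v IH g h; rewrite /autM /= permM section_autM IH. Qed.

Lemma actK g : cancel (act g) (act_inv g).
Proof. by move=> v; elim: v g => //= x v IH g; rewrite permK IH. Qed.

Lemma act_invK g : cancel (act_inv g) (act g).
Proof. by move=> v; elim: v g => //= x v IH g; rewrite permKV IH. Qed.

Lemma act_autV g v : act (autV g) v = act_inv g v.
Proof.
elim: v g => //= x v IH g.
have -> : section (autV g) [:: x] = autV (section g [:: (g [::])^-1 x]).
  by apply: functional_extensionality.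
by rewrite IH.
Qed.

Lemma autMA g h k : autM (autM g h) k = autM g (autM h k).
Proof. by apply: functional_extensionality => v; rewrite /autM act_autM mulgA. Qed.

Lemma aut1M g : autM (@aut1 d) g = g.
Proof. by apply: functional_extensionality => v; rewrite /autM act1 mul1g. Qed.

Lemma autM1 g : autM g (@aut1 d) = g.
Proof. by apply: functional_extensionality => v; rewrite /autM mulg1. Qed.

Lemma autMV g : autM g (autV g) = @aut1 d.
Proof. by apply: functional_extensionality => v; rewrite /autM /autV actK mulgV. Qed.

Lemma autVM g : autM (autV g) g = @aut1 d.
Proof. by apply: functional_extensionality => v; rewrite /autM /autV act_autV mulVg. Qed.

Lemma autKM g h : autM (autV g) (autM g h) = h.
Proof. by rewrite -autMA autVM aut1M. Qed.

Lemma autMKV g h : autM (autM h (autV g)) g = h.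
Proof. by rewrite autMA autVM autM1. Qed.

Lemma autV_unique g h : autM g h = @aut1 d -> h = autV g.
Proof. by move=> gh1; rewrite -[h](autKM g) gh1 autM1. Qed.

Lemma autVK g : autV (autV g) = g.
Proof. by symmetry; apply: autV_unique; rewrite autVM. Qed.

Lemma autV_autM g h : autV (autM g h) = autM (autV h) (autV g).
Proof. by symmetry; apply: autV_unique; rewrite autMA -(autMA h) autMV aut1M autMV. Qed.

Lemma section_autV g v : section (autV g) v = autV (section g (act_inv g v)).
Proof.
apply: autV_unique.
by rewrite -{2}(act_invK g v) -section_autM autMV.
Qed.

End Portraits.

Section Truncation.
Variable d : nat.
Implicit Types (g h : aut d) (u v w : vert d).

Lemma act_trunc n g v : size v <= n -> act (trunc n g) v = act g v.
Proof.
elim: v g n => //= x v IH g [|n] //= le_vn.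
have -> : section (trunc n.+1 g) [:: x] = trunc n (section g [:: x]).
  by apply: functional_extensionality.
by rewrite IH.
Qed.

Lemma trunc_autM n g h : trunc n (autM g h) = autM (trunc n g) (trunc n h).
Proof.
apply: functional_extensionality => v; rewrite /trunc /autM size_act.
by case: ifP => [lt_vn|_]; rewrite ?act_trunc 1?ltnW ?mulg1.
Qed.

Lemma trunc1 n : trunc n (@aut1 d) = @aut1 d.
Proof. by apply: functional_extensionality => v; rewrite /trunc; case: ifP. Qed.

Lemma trunc_autV n g : trunc n (autV g) = autV (trunc n g).
Proof. by apply: autV_unique; rewrite -trunc_autM autMV trunc1. Qed.

Lemma trunc_eqP n g h :
  trunc n g = trunc n h <-> (forall v, size v < n -> g v = h v).
Proof.
split=> [E v lt_vn|E].
  by have := congr1 (fun f => f v) E; rewrite /trunc lt_vn.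
by apply: functional_extensionality => v; rewrite /trunc; case: ifP => // /E.
Qed.

Lemma trunc_eq1P n g : trunc n g = @aut1 d <-> (forall v, size v < n -> g v = 1).
Proof. by rewrite -(trunc1 n); apply: trunc_eqP. Qed.

Lemma trunc_mono m n g h : m <= n -> trunc n g = trunc n h -> trunc m g = trunc m h.
Proof.
by move=> le_mn /trunc_eqP E; apply/trunc_eqP => v /leq_trans /(_ le_mn) /E.
Qed.

Lemma trunc1_mono m n g : m <= n -> trunc n g = @aut1 d -> trunc m g = @aut1 d.
Proof.
by move=> le_mn /trunc_eq1P g1; apply/trunc_eq1P => v /leq_trans /(_ le_mn) /g1.
Qed.

Lemma trunc_trunc n g : trunc n (trunc n g) = trunc n g.
Proof. by apply/trunc_eqP => v lt_vn; rewrite /trunc lt_vn. Qed.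

Lemma img_trunc_subgroup_level (K : aut d -> Prop) D :
  is_subgroup K -> is_subgroup_level D (img_trunc D K).
Proof.
case=> K1 KM KV; split=> [|_ [g [_ ->]]]; last exact: trunc_trunc.
split.
- by exists (@aut1 d); rewrite trunc1.
- move=> _ _ [g [Kg ->]] [h [Kh ->]]; exists (autM g h).
  by rewrite trunc_autM; split=> //; apply: KM.
- by move=> _ [g [Kg ->]]; exists (autV g); rewrite trunc_autV; split=> //; apply: KV.
Qed.

End Truncation.

Section Supports.
Variable d : nat.
Implicit Types (g h : aut d) (u v w : vert d).

Definition supp g v := forall u, ~~ prefix v u -> g u = 1.

Lemma act_fix g u : (forall k, k < size u -> g (take k u) = 1) -> act g u = u.
Proof.
elim: u g => //= x u IH g g1; move: (g1 0 (ltn0Sn _)) => /= ->.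
by rewrite perm1 IH // => k; apply: (g1 k.+1).
Qed.

Lemma supp_act g v u : supp g v -> ~~ prefix v u -> act g u = u.
Proof.
move=> gv vNu; apply: act_fix => k _; apply: gv; apply: contra vNu => vk.
exact: prefix_trans vk (prefix_take _ _).
Qed.

Lemma supp_act_self g v : supp g v -> act g v = v.
Proof.
move=> gv; apply: act_fix => k lt_kv; apply: gv; apply/negP => /size_prefix.
by rewrite size_take lt_kv leqNgt lt_kv.
Qed.

Lemma prefix_act g v u : act g v = v -> prefix v u -> prefix v (act g u).
Proof. by move=> gv /prefixP [s ->]; rewrite act_cat gv prefix_prefix. Qed.

Lemma prefix_size_inj v w u : size v = size w -> prefix v u -> prefix w u -> v = w.
Proof. by rewrite !prefixE => vw /eqP <- /eqP <-; rewrite vw. Qed.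

Lemma prefix_rcons_eq v u a : prefix v (rcons u a) -> ~~ prefix v u -> v = rcons u a.
Proof.
move=> /prefixP [s]; case/lastP: s => [|s y]; first by rewrite cats0.
by rewrite -rcons_cat => /rcons_inj [-> _]; rewrite prefix_prefix.
Qed.

Lemma supp_autM g h v : supp g v -> supp h v -> supp (autM g h) v.
Proof. by move=> gv hv u vNu; rewrite /autM (supp_act gv vNu) gv ?hv ?mulg1. Qed.

Lemma supp_autV g v : supp g v -> supp (autV g) v.
Proof.
move=> gv u vNu; rewrite /autV -{1}(supp_act gv vNu) actK.
by rewrite gv ?invg1.
Qed.

(* The portrait of g at u is read off from the action of g on the children of u. *)
Lemma rist_supp (K : aut d -> Prop) v g : rist K v g <-> K g /\ supp g v.
Proof.
split=> [[Kg gfix]|[Kg gv]]; split=> //; last by move=> w; apply: supp_act.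
move=> u vNu; have gu : act g u = u by apply: gfix.
have gua a : rcons u a != v -> g u a = a.
  move=> uav; have vNua : ~~ prefix v (rcons u a).
    by apply: contra uav => vua; rewrite -(prefix_rcons_eq vua vNu).
  move/(f_equal (@last _ a)): (gfix _ vNua).
  by rewrite -cats1 act_cat gu !last_cat /= /section cats0.
apply/permP => a; rewrite perm1.
have [uav|] := eqVneq (rcons u a) v; last exact: gua.
have [|ga] := eqVneq (g u a) a => //.
have : rcons u (g u a) != v.
  by rewrite -uav; apply/negP => /eqP /rcons_inj [ga']; rewrite ga' eqxx in ga.
by move/gua/perm_inj => ga'; rewrite ga' eqxx in ga.
Qed.

End Supports.

Section LevelRigidStabilizers.
Variable d : nat.
Implicit Types (g h : aut d) (u v w : vert d).

Lemma mem_level m v : (v \in level d m) = (size v == m).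
Proof.
apply/mapP/eqP => [[t _ ->]|vm]; first by rewrite size_tuple.
by rewrite -vm; exists (in_tuple v); rewrite ?mem_enum.
Qed.

Lemma uniq_level m : uniq (level d m).
Proof. by rewrite map_inj_uniq ?enum_uniq //; apply: val_inj. Qed.

Definition prod_at (L : seq (vert d)) (f : vert d -> aut d) :=
  foldr (@autM d) (@aut1 d) [seq f v | v <- L].

Lemma prod_at_out L f u : {in L, forall v, supp (f v) v} ->
  {in L, forall v, ~~ prefix v u} -> prod_at L f u = 1.
Proof.
rewrite /prod_at; elim: L => //= a L IH fsupp Nu; have aL := mem_head a L.
rewrite /autM (fsupp a aL u (Nu a aL)) (supp_act (fsupp a aL) (Nu a aL)) mul1g.
by apply: IH => v vL; [apply: fsupp | apply: Nu]; rewrite inE vL orbT.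
Qed.

Lemma prod_at_in L f m v u : uniq L -> {in L, forall w, size w = m} ->
  {in L, forall w, supp (f w) w} -> v \in L -> prefix v u -> prod_at L f u = f v u.
Proof.
rewrite /prod_at; elim: L => //= a L IH /andP [aNL uL] Lm fsupp vL vu.
have aL := mem_head a L; have fa := fsupp a aL.
have Lm' : {in L, forall w, size w = m} by move=> w wL; apply: Lm; rewrite inE wL orbT.
have fsupp' : {in L, forall w, supp (f w) w}.
  by move=> w wL; apply: fsupp; rewrite inE wL orbT.
rewrite /autM; have [va|vNa] := eqVneq v a.
  subst v; rewrite -/(prod_at L f) prod_at_out ?mulg1 // => w wL; apply/negP => wu.
  have wa : w = a.
    by apply: prefix_size_inj wu (prefix_act (supp_act_self fa) vu); rewrite Lm' // Lm.
  by rewrite -wa wL in aNL.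
have vL' : v \in L by move: vL; rewrite inE (negbTE vNa).
have aNu : ~~ prefix a u.
  apply/negP => au; move/eqP: vNa; apply; apply: prefix_size_inj vu au.
  by rewrite Lm' // Lm.
by rewrite (fa u aNu) (supp_act fa aNu) mul1g IH.
Qed.

Lemma prod_at_closed (K : aut d -> Prop) L f : is_subgroup K ->
  {in L, forall v, K (f v)} -> K (prod_at L f).
Proof.
case=> K1 KM _; rewrite /prod_at; elim: L => //= a L IH Kf.
apply: KM; first by apply: Kf; rewrite mem_head.
by apply: IH => v vL; apply: Kf; rewrite inE vL orbT.
Qed.

Definition restrict v g : aut d := fun u => if prefix v u then g u else 1.

Lemma supp_restrict v g : supp (restrict v g) v.
Proof. by move=> u /negbTE vNu; rewrite /restrict vNu. Qed.

Definition splits_at (K : aut d -> Prop) m g :=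
  (forall u, size u < m -> g u = 1) /\ (forall v, size v = m -> K (restrict v g)).

Lemma Rist_splits K m g : Rist K m g -> splits_at K m g.
Proof.
case=> f [fm ->]; have Lm w : w \in level d m -> size w = m by rewrite mem_level => /eqP.
have fsupp : {in level d m, forall w, supp (f w) w} by move=> w /Lm /fm /rist_supp [].
split=> [u lt_um|v vm].
  apply: prod_at_out => // w /Lm wm; apply/negP => /size_prefix.
  by rewrite wm leqNgt lt_um.
suff -> : restrict v (prod_at (level d m) f) = f v by case: (fm v vm).
have vL : v \in level d m by rewrite mem_level vm.
apply: functional_extensionality => u; rewrite /restrict; case: ifP => vu.
  exact: (prod_at_in (uniq_level m) Lm fsupp vL vu).
by rewrite (fsupp v vL) ?vu.
Qed.

Lemma splits_Rist K m g : splits_at K m g -> Rist K m g.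
Proof.
case=> g1 gK; exists (fun v => restrict v g); split.
  by move=> v vm; apply/rist_supp; split; [apply: gK | apply: supp_restrict].
rewrite -/(prod_at (level d m) (fun v => restrict v g)).
have Lm w : w \in level d m -> size w = m by rewrite mem_level => /eqP.
have rsupp : {in level d m, forall w, supp (restrict w g) w}.
  by move=> w _; apply: supp_restrict.
apply: functional_extensionality => u; have [lt_um|le_mu] := ltnP (size u) m.
  rewrite g1 // prod_at_out // => w /Lm wm; apply/negP => /size_prefix.
  by rewrite wm leqNgt lt_um.
have uL : take m u \in level d m by rewrite mem_level size_takel.
by rewrite (prod_at_in (uniq_level m) Lm rsupp uL (prefix_take _ _)) /restrict prefix_take.
Qed.

Lemma Rist_sub K m g : is_subgroup K -> Rist K m g -> K g.
Proof.
move=> sK [f [fm ->]]; apply: prod_at_closed => // v.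
by rewrite mem_level => /eqP /fm [].
Qed.

Lemma Rist_subset (K K' : aut d -> Prop) m g :
  (forall h, K h -> K' h) -> Rist K m g -> Rist K' m g.
Proof. by move=> KK' [f [fm ->]]; exists f; split=> // v /fm [/KK']. Qed.

Lemma restrict_autM v g h : (forall u, size u < size v -> g u = 1) ->
  restrict v (autM g h) = autM (restrict v g) (restrict v h).
Proof.
move=> g1; apply: functional_extensionality => u; rewrite /autM /restrict.
case: ifP => vu; last by rewrite (supp_act (@supp_restrict v g)) ?vu ?mulg1.
have gv : act g v = v by apply: act_fix => k lt_kv; rewrite g1 // size_take lt_kv.
suff -> : act (restrict v g) u = act g u by rewrite (prefix_act gv vu).
case/prefixP: vu => s ->; rewrite !act_cat (supp_act_self (@supp_restrict v g)) gv.
by congr (_ ++ act _ _); apply: functional_extensionality => w;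
  rewrite /section /restrict prefix_prefix.
Qed.

Lemma Rist_autM K m g h : is_subgroup K -> Rist K m g -> Rist K m h -> Rist K m (autM g h).
Proof.
case=> _ KM _ /Rist_splits [g1 gK] /Rist_splits [h1 hK]; apply: splits_Rist; split.
  by move=> u lt_um; rewrite /autM g1 // h1 ?size_act // mul1g.
by move=> v vm; rewrite restrict_autM ?vm //; apply: KM; [apply: gK | apply: hK].
Qed.

Lemma Rist_autV K m g : is_subgroup K -> Rist K m g -> Rist K m (autV g).
Proof.
case=> _ _ KV /Rist_splits [g1 gK]; apply: splits_Rist; split.
  by move=> u lt_um; rewrite /autV g1 ?size_act_inv // invg1.
move=> v vm; suff -> : restrict v (autV g) = autV (restrict v g) by apply: KV; apply: gK.
apply: autV_unique; rewrite -restrict_autM ?vm // autMV.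
by apply: functional_extensionality => u; rewrite /restrict; case: ifP.
Qed.

End LevelRigidStabilizers.

Section Index.
Variable d : nat.
Implicit Types (g h : aut d) (K L E : aut d -> Prop).

Lemma index_eq_cover K E n : index_eq K E n ->
  exists c : 'I_n -> aut d,
    (forall i, K (c i)) /\ (forall g, K g -> exists i, E (autM g (autV (c i)))).
Proof.
case=> s [_ sK _ scov]; exists (fun i : 'I_n => nth (@aut1 d) s i).
split=> [i|g Kg]; first exact: sK.
by have [i [lt_in Ei]] := scov g Kg; exists (Ordinal lt_in).
Qed.

Definition transversal_part K E (s : seq (aut d)) :=
  (forall i, i < size s -> K (nth (@aut1 d) s i)) /\
  (forall i j, i < size s -> j < size s ->
     E (autM (nth (@aut1 d) s i) (autV (nth (@aut1 d) s j))) -> i = j).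

Lemma transversal_part_rcons K E s a : (forall g, E g -> E (autV g)) ->
  transversal_part K E s -> K a ->
  (forall i, i < size s -> ~ E (autM a (autV (nth (@aut1 d) s i)))) ->
  transversal_part K E (rcons s a).
Proof.
move=> EV [sK sE] Ka aNs; split=> [i|i j]; rewrite size_rcons !ltnS !nth_rcons.
  by case: (ltngtP i (size s)) => [lt_is _|//|_ _]; first apply: sK.
case: (ltngtP i (size s)) => [lt_is _|//|-> _];
  case: (ltngtP j (size s)) => [lt_js _|//|-> _] //.
- exact: sE.
- by move/EV; rewrite autV_autM autVK => /(aNs _ lt_is).
- by move/(aNs _ lt_js).
Qed.

Lemma index_of_cover (T : finType) (c : T -> aut d) K E :
  (forall g, E g -> E (autV g)) -> (forall g h, E g -> E h -> E (autM g h)) ->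
  (forall g, K g -> exists t, K (c t) /\ E (autM g (autV (c t)))) ->
  finite_index K E.
Proof.
move=> EV EM ccov.
pose covered s g := exists2 i, i < size s & E (autM g (autV (nth (@aut1 d) s i))).
(* Scan the family [c], keeping each member in [K] not yet equivalent to a kept one. *)
suff: forall (ts : seq T) s, transversal_part K E s ->
    (forall g, K g -> covered s g \/
       exists t, [/\ t \in ts, K (c t) & E (autM g (autV (c t)))]) ->
    finite_index K E.
  move/(_ (enum T) [::]); apply; first by split.
  by move=> g /ccov [t [Kt Et]]; right; exists t; rewrite mem_enum.
elim=> [|t ts IH] s [sK sE] scov.
  exists (size s), s; split=> // g /scov [[i lt_is Ei]|[t []]] //.
  by exists i.
have [[Kt tNs]|] := classic (K (c t) /\ forall i, i < size s ->
                                ~ E (autM (c t) (autV (nth (@aut1 d) s i)))).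
  apply: (IH (rcons s (c t))); first exact: transversal_part_rcons.
  move=> g /scov [[i lt_is Ei]|[t' [+ Kt' Et']]].
    by left; exists i; [rewrite size_rcons ltnS ltnW | rewrite nth_rcons lt_is].
  rewrite inE => /orP [/eqP t't|t'ts]; last by right; exists t'.
  by left; exists (size s); rewrite ?size_rcons ?nth_rcons ?ltnn ?eqxx -?t't.
move=> tNs; apply: (IH s) => // g /scov [gs|[t' [+ Kt' Et']]]; first by left.
rewrite inE => /orP [/eqP t't|t'ts]; last by right; exists t'.
have [i lt_is Ei] : covered s (c t).
  apply: NNPP => Nts; apply: tNs; split=> [|i lt_is Ei]; first by rewrite -t't.
  by apply: Nts; exists i.
by left; exists i => //; move: (EM _ _ Et' Ei); rewrite t't autMA autKM.
Qed.

Lemma index_of_key (T : finType) (key : aut d -> T) K E :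
  (forall g, E g -> E (autV g)) -> (forall g h, E g -> E h -> E (autM g h)) ->
  (forall g h, K g -> K h -> key g = key h -> E (autM g (autV h))) ->
  finite_index K E.
Proof.
move=> EV EM keyE.
have /fin_all_exists [c cP] : forall t : T, exists c : aut d,
    (exists g, K g /\ key g = t) -> K c /\ key c = t.
  by move=> t; case: (classic (exists g, K g /\ key g = t)) => [[g gt]|Nt];
    [exists g | exists (@aut1 d)].
apply: (index_of_cover (c := c)) => // g Kg; exists (key g).
have [Kc kc] := cP (key g) (ex_intro _ g (conj Kg erefl)).
by split=> //; apply: keyE.
Qed.

Lemma finite_index_trans K L E E' m n :
  (forall g h, K g -> K h -> K (autM g h)) -> (forall h, L h -> K h) ->
  (forall h, E h -> E' h) ->
  (forall g, E' g -> E' (autV g)) -> (forall g h, E' g -> E' h -> E' (autM g h)) ->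
  index_eq K L m -> index_eq L E n -> finite_index K E'.
Proof.
move=> KM LK EE' E'V E'M /index_eq_cover [r [rK rcov]] /index_eq_cover [s [sL scov]].
apply: (index_of_cover (c := fun p : 'I_m * 'I_n => autM (s p.2) (r p.1))) => // g Kg.
have [i Ei] := rcov g Kg; have [j Ej] := scov _ Ei.
exists (i, j); split; first by apply: KM; [apply: LK; apply: sL | apply: rK].
by rewrite autV_autM -autMA; apply: EE'.
Qed.

Lemma index_eq_img_trunc K E D n :
  (forall g h, K g -> K h -> K (autM g h)) -> (forall g, K g -> K (autV g)) ->
  (forall g, K g -> img_trunc D E (trunc D g) -> E g) ->
  index_eq K E n -> index_eq (img_trunc D K) (img_trunc D E) n.
Proof.
move=> KM KV Esat [s [sn sK sE scov]]; exists (map (trunc D) s).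
split=> [|i lt_in|i j lt_in lt_jn|_ [g [Kg ->]]];
  rewrite ?size_map ?(nth_map (@aut1 d)) ?sn //.
- by exists (nth (@aut1 d) s i); split=> //; apply: sK.
- move=> [h [Eh trh]]; apply: sE => //; apply: Esat.
    by apply: KM (sK _ _) (KV _ (sK _ _)).
  by exists h; rewrite trunc_autM trunc_autV.
- have [i [lt_in Ei]] := scov g Kg; exists i; split=> //.
  exists (autM g (autV (nth (@aut1 d) s i))).
  by rewrite trunc_autM trunc_autV (nth_map (@aut1 d)) ?sn.
Qed.

End Index.

Section GHSubgroup.
Variable d : nat.
Implicit Types (g h x : aut d) (u v w : vert d).
Variables G H : aut d -> Prop.
Hypotheses (sG : is_subgroup G) (sH : is_subgroup H) (nHG : normal_in H G).
Hypotheses (secG : forall g v, G g -> G (section g v)).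

Lemma normal_conj x h : G x -> H h -> H (autM (autM x h) (autV x)).
Proof. by case: sG => _ _ GV Gx Hh; move: (nHG.2 _ _ (GV _ Gx) Hh); rewrite autVK. Qed.

Lemma sub_GH (secH : forall h v, H h -> H (section h v)) h : H h -> GH G H h.
Proof.
case: sH => _ HM HV Hh; split=> [|v w]; first exact: nHG.1.
by apply: HM; [|apply: HV]; apply: secH.
Qed.

Lemma GH_subgroup : is_subgroup (GH G H).
Proof.
case: (sG) (sH) => G1 GM GV [H1 HM HV]; split.
- by split=> // v w; rewrite autMV.
- move=> g k [Gg Hg] [Gk Hk]; split=> [|v w]; first exact: GM.
  rewrite !section_autM.
  set a := section g v; set b := section k (act g v).
  set c := section g w; set e := section k (act g w).
  have -> : autM (autM a b) (autV (autM c e)) =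
            autM (autM (autM a (autM b (autV e))) (autV a)) (autM a (autV c)).
    by rewrite autV_autM !autMA autKM.
  by apply: HM (Hg v w); apply: normal_conj; [apply: secG | apply: Hk].
- move=> g [Gg Hg]; split=> [|v w]; first exact: GV.
  rewrite !section_autV autVK.
  set a := section g (act_inv g v); set c := section g (act_inv g w).
  have -> : autM (autV a) c = autM (autM (autV a) (autM c (autV a))) a.
    by rewrite !autMA autVM autM1.
  by apply: nHG.2; [apply: secG | apply: Hg].
Qed.

End GHSubgroup.

Lemma ex_ubound (T : finType) (P : T -> nat -> Prop) :
  (forall t M M', M <= M' -> P t M -> P t M') -> (forall t, exists M, P t M) ->
  exists M, forall t, P t M.
Proof.
move=> Pmono /fin_all_exists [f fP]; exists (\max_t f t) => t.
by apply: Pmono (fP t); apply: leq_bigmax.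
Qed.

Lemma open_of_closed_cover d (H L : aut d -> Prop) (T : finType) (c : T -> aut d) :
  (forall g h, L g -> L h -> L (autM g h)) -> (forall g, L g -> L (autV g)) ->
  cong_closed L -> (forall h, H h -> exists t, L (autM h (autV (c t)))) ->
  exists M, forall k, H k -> trunc M k = @aut1 d -> L k.
Proof.
move=> LM LV Lcl ccov.
have [M Mc] : exists M, forall t k, trunc M k = @aut1 d -> L (autM k (autV (c t))) -> L k.
  apply: ex_ubound => [t M M' le_MM' tM k /(trunc1_mono le_MM')|t]; first exact: tM.
  have [Lc|Nc] := classic (L (autV (c t))).
    by exists 0 => k _ /LM /(_ (LV _ Lc)); rewrite autVK autMKV.
  (* [autV (c t)] lies outside the closed set [L], hence so does a neighbourhood of it. *)
  have [M Mt] : exists M, ~ exists l, L l /\ trunc M l = trunc M (autV (c t)).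
    apply: NNPP => NM; apply/Nc/Lcl => M; apply: NNPP => NMl.
    by apply: NM; exists M => -[l [Ll lM]]; apply: NMl; exists l.
  exists M => k k1 Lk; case: Mt; exists (autM k (autV (c t))); split=> //.
  by rewrite trunc_autM k1 aut1M trunc_autV.
by exists M => k Hk k1; have [t Lt] := ccov k Hk; apply: Mc k1 Lt.
Qed.

Section BranchFiniteType.
Variable d : nat.
Implicit Types (g h k : aut d) (u v w : vert d).
Variable H : aut d -> Prop.
Hypotheses (sH : is_subgroup H) (cH : cong_closed H) (fH : fractal H).

Definition rist_sections (x : 'I_d) k :=
  exists r, rist H [:: x] r /\ section r [:: x] = k.

Definition graft (x : 'I_d) k : aut d :=
  fun u => if u is y :: w then (if y == x then k w else 1) else 1.

Lemma rist_autM v g h : rist H v g -> rist H v h -> rist H v (autM g h).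
Proof.
case: sH => _ HM _ /rist_supp [Hg gv] /rist_supp [Hh hv].
by apply/rist_supp; split; [apply: HM | apply: supp_autM].
Qed.

Lemma rist_autV v g : rist H v g -> rist H v (autV g).
Proof.
case: sH => _ _ HV /rist_supp [Hg gv].
by apply/rist_supp; split; [apply: HV | apply: supp_autV].
Qed.

Lemma rist_sections_autM x g h :
  rist_sections x g -> rist_sections x h -> rist_sections x (autM g h).
Proof.
move=> [r [rx <-]] [s [sx <-]]; exists (autM r s); split; first exact: rist_autM.
by case/rist_supp: rx => _ /supp_act_self rx; rewrite section_autM rx.
Qed.

Lemma rist_sections_autV x g : rist_sections x g -> rist_sections x (autV g).
Proof.
move=> [r [rx <-]]; exists (autV r); split; first exact: rist_autV.
case/rist_supp: rx => _ /supp_act_self rx.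
by rewrite section_autV -{1}rx actK.
Qed.

Lemma section_graft x k : section (graft x k) [:: x] = k.
Proof. by apply: functional_extensionality => w; rewrite /section /graft /= eqxx. Qed.

Lemma supp_graft x k : supp (graft x k) [:: x].
Proof. by move=> [|y w] //=; rewrite prefix0s andbT eq_sym => /negbTE ->. Qed.

Lemma rist_sections_closed x : cong_closed (rist_sections x).
Proof.
move=> k kcl; exists (graft x k); split; last exact: section_graft.
apply/rist_supp; split; last exact: supp_graft.
apply: cH => n; have [l [[r [/rist_supp [Hr rx] rl]] lk]] := kcl n.
exists r; split=> //; apply/trunc_eqP => -[|y w] lt_un; first by rewrite rx.
rewrite /graft; have [->|yx] := eqVneq y x; last by rewrite rx //= prefix0s andbT eq_sym.
by move/trunc_eqP: lk => /(_ w (ltnW lt_un)); rewrite -rl.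
Qed.

Lemma rist_sections_cover (bH : branch H) x : exists n (c : 'I_n -> aut d),
  forall h, H h -> exists i, rist_sections x (autM h (autV (c i))).
Proof.
case: bH => _ /(_ 1%N) [n /index_eq_cover [c [_ ccov]]]; case: fH => _ _ fixsec.
exists n, (fun i => section (c i) [:: x]) => h Hh.
have [f [Hf fx <-]] := fixsec [:: x] h Hh.
have [i /Rist_splits [rho1 rhoH]] := ccov f Hf.
set rho := autM f (autV (c i)) in rho1 rhoH.
exists i, (restrict [:: x] rho); split.
  by apply/rist_supp; split; [apply: rhoH | apply: supp_restrict].
have rhox : act rho [:: x] = [:: x] by apply: act_fix => -[|k] //= _; apply: rho1.
have -> : f = autM rho (c i) by rewrite /rho autMKV.
rewrite section_autM rhox autMA autMV autM1.
by apply: functional_extensionality => w; rewrite /section /restrict /= eqxx prefix0s.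
Qed.

Lemma rist_sections_open (bH : branch H) :
  exists M, forall x k, H k -> trunc M k = @aut1 d -> rist_sections x k.
Proof.
apply: ex_ubound => [x M M' le_MM' xM k Hk /(trunc1_mono le_MM')|x]; first exact: xM.
have [n [c ccov]] := rist_sections_cover bH x.
apply: (open_of_closed_cover (c := c)) => //.
- exact: rist_sections_autM.
- exact: rist_sections_autV.
- exact: rist_sections_closed.
Qed.

Lemma glue_rist n g : g [::] = 1 ->
  (forall x, exists2 r, rist H [:: x] r &
     trunc n (section r [:: x]) = trunc n (section g [:: x])) ->
  exists2 k, H k & trunc n.+1 k = trunc n.+1 g.
Proof.
move=> g1 /fin_all_exists2 [r rx rg].
(* The [r x] have disjoint supports, so [k] is their product, an element of Rist_H(1). *)
pose k : aut d := fun u => if u is x :: _ then r x u else 1.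
exists k.
  apply: (Rist_sub (m := 1)) => //; apply: splits_Rist; split=> [[|//]|[|y [|//]]] // _.
  suff -> : restrict [:: y] k = r y by case: (rx y).
  case/rist_supp: (rx y) => _ ry; apply: functional_extensionality => -[|z w].
    by rewrite /restrict /= ry.
  rewrite /restrict /= prefix0s andbT; have [->|] := eqVneq y z => //= yz.
  by rewrite ry //= prefix0s andbT yz.
apply/trunc_eqP => -[|x w] //= lt_wn.
by move/trunc_eqP: (rg x) => /(_ w lt_wn).
Qed.

Lemma finite_type_section D g v :
  finite_type_group D (img_trunc D H) g -> finite_type_group D (img_trunc D H) (section g v).
Proof. by move=> gft w; rewrite section_cat; apply: gft. Qed.

Lemma finite_type_autM D h g : H h ->
  finite_type_group D (img_trunc D H) g -> finite_type_group D (img_trunc D H) (autM h g).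
Proof.
case: sH fH => _ HM _ [secH _ _] Hh gft v; rewrite section_autM trunc_autM.
have [h' [Hh' ->]] := gft (act h v).
exists (autM (section h v) h'); rewrite trunc_autM; split=> //.
exact: HM (secH _ _ Hh) Hh'.
Qed.

Lemma trunc_approx M n g :
  (forall x k, H k -> trunc M k = @aut1 d -> rist_sections x k) ->
  finite_type_group M.+1 (img_trunc M.+1 H) g -> exists2 h, H h & trunc n h = trunc n g.
Proof.
case: (sH) => H1 HM HV Mopen; elim: n g => [|n IH] g gft.
  by exists (@aut1 d) => //; apply/trunc_eqP.
have [h0 [Hh0 h0g]] := gft [::].
have [le_nM|lt_Mn] := leqP n.+1 M.+1; first by exists h0 => //; apply: trunc_mono le_nM _.
pose g' := autM (autV h0) g.
have g'1 : forall u, size u < M.+1 -> g' u = 1.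
  by apply/trunc_eq1P; rewrite trunc_autM trunc_autV h0g autVM.
have [k Hk kg'] : exists2 k, H k & trunc n.+1 k = trunc n.+1 g'.
  apply: glue_rist => [|x]; first exact: g'1.
  have g'ft := finite_type_autM (HV _ Hh0) gft.
  have [hx Hhx hxg] := IH _ (finite_type_section [:: x] g'ft).
  have [|r [rx rhx]] := Mopen x hx Hhx.
    have le_Mn : M <= n by rewrite -ltnS ltnW.
    rewrite (trunc_mono le_Mn hxg); apply/trunc_eq1P => w lt_wM.
    exact: g'1 (x :: w) lt_wM.
  by exists r; rewrite ?rhx.
exists (autM h0 k); first exact: HM.
by rewrite trunc_autM kg' -trunc_autM -autMA autMV aut1M.
Qed.

Lemma branch_finite_type (bH : branch H) : exists D (P : aut d -> Prop),
  [/\ 1 <= D, is_subgroup_level D P & forall g, H g <-> finite_type_group D P g].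
Proof.
have [M Mopen] := rist_sections_open bH.
exists M.+1, (img_trunc M.+1 H); split=> //; first exact: img_trunc_subgroup_level.
move=> g; split=> [Hg v|gft].
  by exists (section g v); split=> //; case: fH => secH _ _; apply: secH.
by apply: cH => n; have [h Hh hg] := trunc_approx n Mopen gft; exists h.
Qed.

End BranchFiniteType.

Section Saturation.
Variable d : nat.
Implicit Types (g h x : aut d) (v : vert d).
Variables (G H : aut d -> Prop) (D : nat) (P : aut d -> Prop).
Hypotheses (sG : is_subgroup G) (sH : is_subgroup H) (nHG : normal_in H G).
Hypotheses (secG : forall g v, G g -> G (section g v)).
Hypotheses (sP : is_subgroup_level D P) (HP : forall g, H g <-> finite_type_group D P g).

(* [section x v] differs from [x] by an element of [H], whose truncation lies in [P]. *)
Lemma GH_trunc_saturated x : GH G H x -> img_trunc D H (trunc D x) -> H x.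
Proof.
case: sP => [[_ PM _] _] [Gx Hx] [h [Hh xh]]; apply/HP => v.
rewrite -(autMKV x (section x v)) trunc_autM xh.
exact: PM (proj1 (HP _) (Hx v [::]) [::]) (proj1 (HP _) Hh [::]).
Qed.

Definition verts_below : seq (vert d) := flatten [seq level d i | i <- iota 0 D].

Lemma mem_verts_below v : size v < D -> v \in verts_below.
Proof.
move=> lt_vD; apply/flattenP; exists (level d (size v)); last by rewrite mem_level.
by apply: map_f; rewrite mem_iota.
Qed.

Definition portrait_below g : {ffun seq_sub verts_below -> {perm 'I_d}} :=
  [ffun v => g (ssval v)].

Lemma portrait_below_trunc g h :
  portrait_below g = portrait_below h -> trunc D g = trunc D h.
Proof.
move/ffunP=> gh; apply/trunc_eqP => v /mem_verts_below vD.
by move: (gh (SeqSub vD)); rewrite !ffunE.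
Qed.

Lemma GH_index_eq : exists n,
  index_eq (GH G H) H n /\ index_eq (img_trunc D (GH G H)) (img_trunc D H) n.
Proof.
have [_ GHM GHV] := GH_subgroup sG sH nHG secG; case: (sH) => _ HM HV.
have [n GH_H] : finite_index (GH G H) H.
  apply: (index_of_key (key := portrait_below)) => // g h GHg GHh.
  move/portrait_below_trunc=> gh.
  apply: GH_trunc_saturated; first exact: GHM (GHV _ GHh).
  by exists (@aut1 d); rewrite trunc_autM trunc_autV gh autMV trunc1; case: sH.
by exists n; split=> //; apply: index_eq_img_trunc => //; apply: GH_trunc_saturated.
Qed.

End Saturation.

Theorem proposition2p10 (d : nat) (G H : aut d -> Prop) :
  is_subgroup G -> is_subgroup H -> normal_in H G ->
  cong_closed G -> cong_closed H -> fractal G -> fractal H ->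
  (exists h, H h /\ h <> @aut1 d) ->
  branch H ->
  branch (GH G H) /\
  (forall (D : nat) (P : aut d -> Prop),
     1 <= D -> is_subgroup_level D P ->
     (forall g, H g <-> finite_type_group D P g) ->
     exists n : nat,
       index_eq (GH G H) H n /\
       index_eq (img_trunc D (GH G H)) (img_trunc D H) n).
Proof.
move=> sG sH nHG _ cH [secG _ _] fH _ bH; have [secH ltH _] := fH.
have H_GH := sub_GH sH nHG secH.
have sGH := GH_subgroup sG sH nHG secG.
split; last by move=> D P _ sP HP; exact: (GH_index_eq sG sH nHG secG sP HP).
have [D [P [_ sP HP]]] := branch_finite_type sH cH fH bH.
have [n [GH_H _]] := GH_index_eq sG sH nHG secG sP HP.
split=> [v w vw|m].
  by have [h [Hh hv]] := ltH v w vw; exists h; split=> //; apply: H_GH.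
have [l H_Rist] := bH.2 m.
case: (sGH) => _ GHM _.
apply: (finite_index_trans GHM H_GH _ _ _ GH_H H_Rist) => [h|g|g h].
- exact: Rist_subset.
- exact: Rist_autV.
- exact: Rist_autM.
Qed.
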